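(* Let $n\geq5$ and $J=J(P_n)$. Let $u,v\in G(J)$ be such that $x_{n-1}x_{n-4}$ divides $u$ and $x_nx_{n-3}$ divides $v$. Then $uv$ is not a minimal generator of $J^2$. Moreover, there exists a $2$-fold product $pw\in F(J^2)$ such that $pw$ divides $uv$ and $pw>_{\mathcal R}uv$.
   Context: Let $K$ be a field. For $m\geq 1$, $P_m$ is the path graph on vertices $x_1,\ldots,x_m$ with edges $\{x_i,x_{i+1}\}$. The cover ideal $J(P_m)$ is generated by the monomials $\prod_{x\in C}x$ with $C$ a minimal vertex cover of $P_m$. For a monomial ideal $I$, $G(I)$ is its set of minimal monomial generators and $F(I^2)=\{uv:u,v\in G(I)\}$. The rooted list $\mathcal R(P_m)$ is defined recursively: $\mathcal R(P_1)$ empty; $\mathcal R(P_2)=x_1,x_2$; $\mathcal R(P_3)=x_2,x_1x_3$; $\mathcal R(P_4)=x_1x_3,x_2x_3,x_2x_4$; for $m\geq5$, if $\mathcal R(P_{m-2})=u_1,\ldots,u_r$ and $\mathcal R(P_{m-3})=v_1,\ldots,v_s$, then $\mathcal R(P_m)=x_{m-1}u_1,\ldots,x_{m-1}u_r,x_mx_{m-2}v_1,\ldots,x_mx_{m-2}v_s$; it lists each element of $G(J(P_m))$ once. With $\mathcal R(P_m)=u_1,\ldots,u_q$, each $M\in F(J(P_m)^2)$ can be written $u_1^{a_1}\cdots u_q^{a_q}$ with $a_i\geq0$, $\sum a_i=2$; the maximal expression of $M$ is the one with lexicographically largest exponent vector. The rooted order on $F(J(P_m)^2)$: $M>_{\mathcal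 R}N$ iff the exponent vector of the maximal expression of $M$ is lexicographically larger than that of $N$. *)

From mathcomp Require Import all_boot.
Set Implicit Arguments. Unset Strict Implicit. Unset Printing Implicit Defensive.

(* A monomial in x_1, x_2, ... is encoded as the sorted (w.r.t. leq) multiset of
   its variable indices: x_1^2 x_3 is [:: 1; 1; 3].  Indices start at 1. *)
Definition mono := seq nat.

Definition mmul (s t : mono) : mono := sort leq (s ++ t).

Definition mdvd (s t : mono) : bool :=
  all (fun i => count_mem i s <= count_mem i t) s.

Definition mpow (u : mono) (k : nat) : mono := iter k (mmul u) [::].
Definition mexpr (R : seq mono) (a : seq nat) : mono :=
  foldr mmul [::] [seq mpow p.1 p.2 | p <- zip R a].

(* Path graph P_n on x_1..x_n; a vertex subset is a {set 'I_n}, with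
   i : 'I_n standing for the vertex x_{i+1}. *)
Definition is_cover (n : nat) (C : {set 'I_n}) : Prop :=
  forall i j : 'I_n, (val j = (val i).+1)%N -> (i \in C) || (j \in C).

Definition is_min_cover (n : nat) (C : {set 'I_n}) : Prop :=
  is_cover C /\ forall D : {set 'I_n}, D \proper C -> ~ is_cover D.

Definition cover_mono (n : nat) (C : {set 'I_n}) : mono :=
  sort leq [seq (val i).+1 | i <- enum C].

Definition inGJ (n : nat) (u : mono) : Prop :=
  exists C : {set 'I_n}, is_min_cover C /\ u = cover_mono C.

Definition inF2 (n : nat) (M : mono) : Prop :=
  exists u v, inGJ n u /\ inGJ n v /\ M = mmul u v.

Definition inGJ2 (n : nat) (M : mono) : Prop :=
  inF2 n M /\ forall N, inF2 n N -> mdvd N M -> N = M.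

Fixpoint rlist (m : nat) : seq mono :=
  match m with
  | 0 => [::]
  | 1 => [::]
  | 2 => [:: [:: 1]; [:: 2]]
  | 3 => [:: [:: 2]; [:: 1; 3]]
  | 4 => [:: [:: 1; 3]; [:: 2; 3]; [:: 2; 4]]
  | S (S ((S ((S (S _)) as y)) as x)) =>
      (* x = m - 2, y = m - 3, m >= 5 *)
      [seq mmul [:: m.-1] u | u <- rlist x] ++
      [seq mmul [:: m.-2; m] v | v <- rlist y]
  end.

Fixpoint lexlt (a b : seq nat) : bool :=
  match a, b with
  | x :: a', y :: b' => (x < y) || ((x == y) && lexlt a' b')
  | _, _ => false
  end.

Definition is_expr (R : seq mono) (M : mono) (a : seq nat) : Prop :=
  size a = size R /\ sumn a = 2 /\ mexpr R a = M.

Definition is_max_expr (R : seq mono) (M : mono) (a : seq nat) : Prop :=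
  is_expr R M a /\ forall b, is_expr R M b -> ~~ lexlt a b.

Definition rooted_gt (R : seq mono) (M N : mono) : Prop :=
  exists a b, is_max_expr R M a /\ is_max_expr R N b /\ lexlt b a.

Example rl5 : rlist 5 = [:: [:: 2; 4]; [:: 1; 3; 4]; [:: 1; 3; 5]; [:: 2; 3; 5]]. Proof. by []. Qed.

From mathcomp Require Import all_boot zify.
Set Implicit Arguments. Unset Strict Implicit. Unset Printing Implicit Defensive.

(* Since x_{n-1} divides u, x_n does not; since x_{n-3} x_n divides v, so does x_{n-2}, but
   not x_{n-4} nor x_{n-1}.  Exchanging the parts of u and v above x_{n-4} yields the minimal
   covers p = u_{<n-3} x_{n-2} x_n and w = v_{<n-3} x_{n-3} x_{n-1}, and pw divides uv.
   The rooted list R(P_n) is increasing for the weight sum_{x_k | m} 2^k.  Let uv = R_i R_j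
   with i <= j.  Then x_n cannot divide the lighter factor R_i, and comparing multiplicities
   of x_{n-4}, ..., x_n shows that x_{n-4} x_{n-1} divides R_i and x_{n-3} x_n divides R_j.
   So pw = P W, where P and W arise from R_i and R_j by the same exchange; W is lighter than
   R_i, hence precedes it in R(P_n), and the expression of pw through W is lexicographically
   larger than the expression (i, j) of uv.  Thus the maximal expression of pw beats that of
   uv; in particular pw <> uv, so uv is not a minimal generator of J^2. *)

Lemma mem_mmul (s t : mono) x : (x \in mmul s t) = (x \in s) || (x \in t).
Proof. by rewrite mem_sort mem_cat. Qed.

Lemma count_mmul (s t : mono) x :
  count_mem x (mmul s t) = count_mem x s + count_mem x t.
Proof. by rewrite count_sort count_cat. Qed.

Lemma sorted_mmul (s t : mono) : sorted leq (mmul s t).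
Proof. exact/sort_sorted/leq_total. Qed.

Lemma mdvd_subset (s t : mono) : mdvd s t -> {subset s <= t}.
Proof.
move=> /allP dst x xs; rewrite -has_pred1 has_count.
by apply: (leq_trans _ (dst x xs)); rewrite -has_count has_pred1.
Qed.

Lemma sorted_ltn_sort (s : seq nat) : uniq s -> sorted ltn (sort leq s).
Proof.
by move=> us; rewrite ltn_sorted_uniq_leq sort_uniq us sort_sorted //; apply: leq_total.
Qed.

Lemma eq_sorted_ltn (s t : seq nat) : sorted ltn s -> sorted ltn t -> s =i t -> s = t.
Proof. exact: (@irr_sorted_eq _ ltn ltn_trans ltnn). Qed.

Lemma sorted_ltn_filter (p : pred nat) s : sorted ltn s -> sorted ltn (filter p s).
Proof. by apply: sorted_filter => y x z; apply: ltn_trans. Qed.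

(* [f] is the indicator of a minimal vertex cover of P_m on the vertices 1..m; minimality is
   stated locally: every chosen vertex has a neighbour that is not chosen. *)
Definition mincover (m : nat) (f : nat -> bool) : Prop :=
  [/\ forall k, f k -> 0 < k <= m,
      forall k, 0 < k < m -> f k || f k.+1 &
      forall k, f k -> ((1 < k) && ~~ f k.-1) || ((k < m) && ~~ f k.+1)].

Definition mincover_seq (m : nat) (s : seq nat) : Prop :=
  sorted ltn s /\ mincover m (fun k => k \in s).

Definition mincover_seqb (m : nat) (s : seq nat) : bool :=
  [&& sorted ltn s, all (fun k => 0 < k <= m) s,
      all (fun k => (k \in s) || (k.+1 \in s)) (iota 1 m.-1) &
      all (fun k => ((1 < k) && (k.-1 \notin s)) || ((k < m) && (k.+1 \notin s))) s].

Lemma mincover_seqP m s : reflect (mincover_seq m s) (mincover_seqb m s).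
Proof.
apply: (iffP and4P) => [[srt /allP rng /allP edge /allP mnl] | [srt [rng edge mnl]]].
  by split=> //; split=> [k /rng | k hk | k /mnl] //; apply: edge; rewrite mem_iota; lia.
split=> //; [apply/allP=> k /rng | apply/allP=> k | apply/allP=> k /mnl] => //.
by rewrite mem_iota => hk; apply: edge; lia.
Qed.

Lemma eq_mincover m f g : f =1 g -> mincover m f -> mincover m g.
Proof.
move=> fg [rng edge mnl]; split=> k; rewrite -!fg; [exact: rng | exact: edge | exact: mnl].
Qed.

Lemma mincover_seq_uniq m s : mincover_seq m s -> uniq s.
Proof. by case=> srt _; apply: sorted_uniq srt; [apply: ltn_trans | apply: ltnn]. Qed.

Lemma mincover_seq_range m s x : mincover_seq m s -> x \in s -> 0 < x <= m.
Proof. by case=> _ [rng _ _] /rng. Qed.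

Lemma mincover_edge m f k : mincover m f -> 0 < k < m -> f k || f k.+1.
Proof. by case=> _ edge _; apply: edge. Qed.

Lemma mincover_no_three m f k : mincover m f -> ~~ [&& f k, f k.+1 & f k.+2].
Proof. by case=> _ _ mnl; apply/and3P => -[fk /mnl /= + fk2]; rewrite fk fk2 !andbF. Qed.

Lemma mincover_last m f : 0 < m -> mincover m f -> ~~ (f m.-1 && f m).
Proof.
move=> m0 [_ _ mnl]; apply/andP => -[fm1 /mnl].
by rewrite fm1 ltnn !andbF.
Qed.

Lemma mincover_extend_penult m f : 4 <= m -> mincover m.-2 f ->
  mincover m (fun k => (k == m.-1) || f k).
Proof.
move=> hm [rng edge mnl]; split.
- by move=> k /orP[/eqP->|/rng]; lia.
- by move=> k hk; have := edge k; lia.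
- move=> k /orP[/eqP->|fk].
    have : ~~ f m by apply/negP => /rng; lia.
    have -> : m.-1.+1 = m by lia.
    lia.
  by have := mnl k fk; have := rng k fk; lia.
Qed.

Lemma mincover_extend_last m f : 5 <= m -> mincover (m - 3) f ->
  mincover m (fun k => [|| k == m.-2, k == m | f k]).
Proof.
move=> hm [rng edge mnl]; split.
- by move=> k /or3P[/eqP->|/eqP->|/rng]; lia.
- by move=> k hk; have := edge k; lia.
- move=> k /or3P[/eqP->|/eqP->|fk].
  + have : ~~ f m.-1 by apply/negP => /rng; lia.
    have -> : m.-2.+1 = m.-1 by lia.
    lia.
  + have : ~~ f m.-1 by apply/negP => /rng; lia.
    lia.
  + by have := mnl k fk; have := rng k fk; lia.
Qed.

Lemma mincover_restrict_penult m f : 5 <= m -> mincover m f -> ~~ f m ->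
  f m.-1 /\ mincover m.-2 (fun k => f k && (k < m.-1)).
Proof.
move=> hm [rng edge mnl] nfm.
have fm1 : f m.-1.
  have := edge m.-1; have -> : m.-1.+1 = m by lia.
  lia.
split=> //; split.
- by move=> k /andP[/rng]; lia.
- by move=> k hk; have := edge k; lia.
- move=> k /andP[fk hk]; have := mnl k fk; have := rng k fk.
  have [->|] := eqVneq k m.-2; last by lia.
  have -> : m.-2.+1 = m.-1 by lia.
  lia.
Qed.

Lemma mincover_restrict_last m f : 5 <= m -> mincover m f -> f m ->
  [/\ f m.-2, ~~ f m.-1 & mincover (m - 3) (fun k => f k && (k < m.-2))].
Proof.
move=> hm [rng edge mnl] fm.
have nfm1 : ~~ f m.-1 by have := mnl m fm; lia.
have fm2 : f m.-2.
  have := edge m.-2; have -> : m.-2.+1 = m.-1 by lia.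
  lia.
split=> //; split.
- by move=> k /andP[/rng]; lia.
- by move=> k hk; have := edge k; lia.
- move=> k /andP[fk hk]; have := mnl k fk; have := rng k fk.
  have [->|] := eqVneq k (m - 3); last by lia.
  have -> : (m - 3).+1 = m.-2 by lia.
  lia.
Qed.

Lemma rlist_rec m : 5 <= m -> rlist m =
  [seq mmul [:: m.-1] u | u <- rlist m.-2] ++ [seq mmul [:: m.-2; m] v | v <- rlist (m - 3)].
Proof. by case: m => [|[|[|[|[|k]]]]] //; rewrite subSS !subSS subn0. Qed.

Lemma rlist_mincover m s : 2 <= m -> s \in rlist m -> mincover_seq m s.
Proof.
elim/ltn_ind: m s => m IH s hm.
have [m4 | m5] := leqP m 4.
  move=> sR; apply/mincover_seqP; move: s sR; apply/allP.
  by case: m {IH} hm m4 => [|[|[|[|[|k]]]]].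
rewrite rlist_rec // mem_cat => /orP[] /mapP[t tR ->].
- have mt : mincover_seq m.-2 t by apply: IH tR; lia.
  split.
    apply: sorted_ltn_sort; rewrite /= (mincover_seq_uniq mt) andbT.
    by apply/negP => /(mincover_seq_range mt); lia.
  apply: eq_mincover (mincover_extend_penult _ mt.2) => [x|]; last by lia.
  by rewrite mem_mmul inE.
- have mt : mincover_seq (m - 3) t by apply: IH tR; lia.
  have rng := mincover_seq_range mt.
  split.
    apply: sorted_ltn_sort; rewrite /= inE (mincover_seq_uniq mt) andbT negb_or -andbA.
    by apply/and3P; split; [lia | apply/negP => /rng; lia | apply/negP => /rng; lia].
  apply: eq_mincover (mincover_extend_last _ mt.2) => [x|]; last by lia.
  by rewrite mem_mmul !inE orbA.
Qed.

Lemma mincover_in_rlist_small m s : 2 <= m <= 4 -> mincover_seq m s -> s \in rlist m.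
Proof.
move=> m24 ms; have rng := mincover_seq_range ms.
have E : s = [seq x <- iota 1 m | x \in s].
  apply: eq_sorted_ltn ms.1 _ _ => [|x]; first exact/sorted_ltn_filter/iota_ltn_sorted.
  by rewrite mem_filter mem_iota; have := rng x; case: (x \in s); lia.
suff base f : mincover_seqb m [seq x <- iota 1 m | f x] ->
    [seq x <- iota 1 m | f x] \in rlist m.
  by rewrite E; apply/base/mincover_seqP; rewrite -E.
by case: m {ms rng E} m24 => [|[|[|[|[|k]]]]] //= _;
  case: (f 1); case: (f 2); case: (f 3); case: (f 4).
Qed.

Lemma mincover_in_rlist m s : 2 <= m -> mincover_seq m s -> s \in rlist m.
Proof.
elim/ltn_ind: m s => m IH s hm ms.
have [m4 | m5] := leqP m 4; first by apply: mincover_in_rlist_small ms; apply/andP.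
have rng := mincover_seq_range ms; have [srt mc] := ms.
rewrite rlist_rec // mem_cat.
have [fm | nfm] := boolP (m \in s).
- have [f2 nf1 mt] := mincover_restrict_last m5 mc fm.
  set t := [seq x <- s | x < m.-2].
  have tR : t \in rlist (m - 3).
    apply: IH; [lia | lia | split; first exact: sorted_ltn_filter].
    by apply: eq_mincover mt => x; rewrite mem_filter andbC.
  apply/orP; right; apply/mapP; exists t => //.
  apply: eq_sorted_ltn srt _ _.
    apply: sorted_ltn_sort; rewrite /= inE filter_uniq ?(mincover_seq_uniq ms) // !mem_filter.
    by rewrite ltnn andbT; lia.
  move=> x; rewrite mem_mmul !inE mem_filter.
  have [->|] := eqVneq x m.-2; first by rewrite f2.
  have [->|] := eqVneq x m; first by rewrite fm orbT.
  have [->|] := eqVneq x m.-1; first by rewrite (negbTE nf1) andbF.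
  by have := rng x; case: (x \in s); lia.
- have [f1 mt] := mincover_restrict_penult m5 mc nfm.
  set t := [seq x <- s | x < m.-1].
  have tR : t \in rlist m.-2.
    apply: IH; [lia | lia | split; first exact: sorted_ltn_filter].
    by apply: eq_mincover mt => x; rewrite mem_filter andbC.
  apply/orP; left; apply/mapP; exists t => //.
  apply: eq_sorted_ltn srt _ _.
    apply: sorted_ltn_sort; rewrite /= filter_uniq ?(mincover_seq_uniq ms) // mem_filter.
    by rewrite ltnn.
  move=> x; rewrite mem_mmul !inE mem_filter.
  have [->|] := eqVneq x m.-1; first by rewrite f1.
  have [->|] := eqVneq x m; first by rewrite (negbTE nfm) andbF.
  by have := rng x; case: (x \in s); lia.
Qed.

Definition weight (s : seq nat) : nat := \sum_(x <- s) 2 ^ x.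

Lemma weight_mmul s t : weight (mmul s t) = weight s + weight t.
Proof. by rewrite /weight (perm_big _ (permEl (perm_sort _ _))) big_cat. Qed.

Lemma leq_weight s t : uniq s -> uniq t -> {subset s <= t} -> weight s <= weight t.
Proof. exact: (uniq_sub_le_big leqnn (fun x y => leq_addr y x)). Qed.

Lemma weight_lt_pow s b : uniq s -> {in s, forall x, x < b} -> weight s < 2 ^ b.
Proof.
move=> us sb; have iota_lt c : weight (iota 0 c) < 2 ^ c.
  elim: c => [|c IH]; first by rewrite /weight big_nil.
  have -> : iota 0 c.+1 = iota 0 c ++ [:: c] by rewrite -addn1 iotaD.
  rewrite /weight big_cat big_seq1 expnS /=.
  by rewrite -/(weight _); lia.
apply: leq_ltn_trans (iota_lt b); apply: leq_weight (iota_uniq _ _) _ => // x xs.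
by rewrite mem_iota sb.
Qed.

Lemma rlist_sorted m : 2 <= m -> sorted (relpre weight ltn) (rlist m).
Proof.
elim/ltn_ind: m => m IH hm.
have [m4 | m5] := leqP m 4.
  by case: m {IH} hm m4 => [|[|[|[|[|k]]]]] //= _ _; rewrite /weight !big_cons !big_nil.
have shift a s : sorted (relpre weight ltn) s ->
    pairwise (relpre weight ltn) [seq mmul a t | t <- s].
  rewrite sorted_pairwise => [srt|y x z]; last exact: ltn_trans.
  by rewrite pairwise_map; apply: sub_pairwise srt => x y /=; rewrite !weight_mmul ltn_add2l.
rewrite rlist_rec // sorted_pairwise => [|y x z]; last exact: ltn_trans.
rewrite pairwise_cat !shift ?IH ?andbT; try lia.
apply/allrelP => _ _ /mapP[s sR ->] /mapP[t tR ->] /=.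
have ws : weight s < 2 ^ m.-1.
  have ms : mincover_seq m.-2 s by apply: rlist_mincover sR; lia.
  by apply: weight_lt_pow (mincover_seq_uniq ms) _ => x /(mincover_seq_range ms); lia.
rewrite !weight_mmul /weight !big_cons !big_nil -/(weight s) -/(weight t).
have -> : 2 ^ m = 2 ^ m.-1 * 2 by rewrite -expnSr; congr (2 ^ _); lia.
lia.
Qed.

Lemma ltn_index_weight R X Y : sorted (relpre weight ltn) R -> X \in R -> Y \in R ->
  (index X R < index Y R) = (weight X < weight Y).
Proof.
have wtr : transitive (relpre weight ltn) by move=> y x z; apply: ltn_trans.
move=> srt XR YR; apply/idP/idP; first exact: (sorted_ltn_index wtr srt).
move=> wXY; rewrite ltnNge leq_eqVlt; apply/negP => /orP[/eqP e | lt].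
  by move: wXY; rewrite -(nth_index [::] XR) -e nth_index // ltnn.
by have := sorted_ltn_index wtr srt Y X YR XR lt; rewrite /= ltnNge ltnW.
Qed.

Lemma mem_cover_mono n (C : {set 'I_n}) x :
  (x \in cover_mono C) = [exists i in C, x == i.+1].
Proof.
rewrite mem_sort; apply/mapP/existsP => [[i iC ->] | [i /andP[iC /eqP->]]].
  by exists i; rewrite -mem_enum iC eqxx.
by exists i; rewrite ?mem_enum.
Qed.

Lemma mem_cover_monoS n (C : {set 'I_n}) (i : 'I_n) : (i.+1 \in cover_mono C) = (i \in C).
Proof.
rewrite mem_cover_mono; apply/existsP/idP => [[j /andP[jC /eqP/succn_inj/val_inj->]] // | iC].
by exists i; rewrite iC eqxx.
Qed.

Lemma cover_mono_range n (C : {set 'I_n}) x : x \in cover_mono C -> 0 < x <= n.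
Proof. by rewrite mem_cover_mono => /existsP[i /andP[_ /eqP->]] /=. Qed.

Lemma sorted_cover_mono n (C : {set 'I_n}) : sorted ltn (cover_mono C).
Proof. by apply: sorted_ltn_sort; rewrite map_inj_uniq ?enum_uniq // => i j [] /val_inj. Qed.

Lemma is_cover_setD1 n (C : {set 'I_n}) (i : 'I_n) : is_cover C ->
  (forall j : 'I_n, (j == i.+1 :> nat) || (i == j.+1 :> nat) -> j \in C) ->
  is_cover (C :\ i).
Proof.
move=> cov nbC a b ab; have /= ab' := ab; rewrite !in_setD1.
have [ai | ai] := eqVneq a i.
  subst a; have bi : b != i by apply/eqP => bi; move: ab'; rewrite bi; lia.
  by rewrite bi /=; apply: nbC; rewrite ab' eqxx.
have [bi | bi] := eqVneq b i.
  by subst b; rewrite /= orbF; apply: nbC; rewrite ab' eqxx orbT.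
exact: cov.
Qed.

Lemma inGJ_mincover n u : inGJ n u -> mincover_seq n u.
Proof.
case=> C [[cov minC] ->]; split; first exact: sorted_cover_mono.
split; first exact: cover_mono_range.
  move=> k hk; have h1 : k.-1 < n by lia.
  have h2 : k < n by lia.
  have := cov (Ordinal h1) (Ordinal h2) (ltac:(rewrite /=; lia)).
  by rewrite -!mem_cover_monoS /= prednK //; lia.
move=> k; rewrite mem_cover_mono => /existsP[i /andP[iC /eqP ki]].
apply/negPn/negP => nowit; apply: (minC (C :\ i)); first by rewrite properD1.
apply: is_cover_setD1 => // j /orP[] /eqP ji; rewrite -mem_cover_monoS; move: nowit.
  by rewrite ki ji; have := ltn_ord j; lia.
by rewrite ki ji /=; lia.
Qed.

Lemma mincover_inGJ n s : mincover_seq n s -> inGJ n s.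
Proof.
move=> ms; have [srt [rng edge mnl]] := ms.
exists [set i : 'I_n | i.+1 \in s].
have -> : cover_mono [set i : 'I_n | i.+1 \in s] = s.
  apply: eq_sorted_ltn (sorted_cover_mono _) srt _ => x.
  rewrite mem_cover_mono; apply/existsP/idP => [[i /andP[]] | xs].
    by rewrite inE => ? /eqP->.
  have /andP[x0 xn] := rng x xs; have h : x.-1 < n by lia.
  by exists (Ordinal h); rewrite inE /= prednK ?xs ?eqxx.
split=> //; split=> [i j /= ji | D /properP[DC [i iC iD]] covD].
  by rewrite !inE ji; apply: edge; have := ltn_ord j; lia.
rewrite inE in iC; case/orP: (mnl _ iC) => /andP[hi nb].
- have ha : i.-1 < n by have := ltn_ord i; lia.
  case/orP: (covD (Ordinal ha) i (ltac:(rewrite /=; lia))); last by rewrite (negbTE iD).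
  by move=> /(subsetP DC); rewrite inE /= prednK ?(negbTE nb) //; lia.
- have hb : i.+1 < n by lia.
  case/orP: (covD i (Ordinal hb) erefl); first by rewrite (negbTE iD).
  by move=> /(subsetP DC); rewrite inE /= (negbTE nb).
Qed.

Definition pairvec (q i j : nat) : seq nat := [seq (k == i) + (k == j) | k <- iota 0 q].

Lemma size_pairvec q i j : size (pairvec q i j) = q.
Proof. by rewrite size_map size_iota. Qed.

Lemma nth_pairvec q i j k : k < q -> nth 0 (pairvec q i j) k = (k == i) + (k == j).
Proof. by move=> kq; rewrite (nth_map 0) ?size_iota // nth_iota. Qed.

Lemma sumn_pairvec q i j : i < q -> j < q -> sumn (pairvec q i j) = 2.
Proof.
have sumnE s : sumn [seq (k == i) + (k == j) | k <- s] = count_mem i s + count_mem j s.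
  by elim: s => //= k s ->; rewrite [k == i]eq_sym [k == j]eq_sym; lia.
by move=> iq jq; rewrite sumnE !count_uniq_mem ?iota_uniq // !mem_iota iq jq.
Qed.

Lemma sumn_eq1 a : sumn a = 1 -> exists2 j, j < size a & forall k, nth 0 a k = (k == j).
Proof.
elim: a => [|[|[|x]] a IH] //= h.
  by have [j ja aj] := IH h; exists j.+1 => // -[|k] //=; apply: aj.
have /natnseq0P a0 : sumn a == 0 by rewrite -(eqn_add2l 1) h.
by exists 0 => // -[|k] //=; rewrite a0 nth_nseq if_same.
Qed.

Lemma sumn_eq2 a : sumn a = 2 ->
  exists i j, [/\ i <= j, j < size a & a = pairvec (size a) i j].
Proof.
move=> a2; suff [i [j [ij ja aij]]] : exists i j, [/\ i <= j, j < size a &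
    forall k, nth 0 a k = (k == i) + (k == j)].
  exists i, j; split=> //; apply: (@eq_from_nth _ 0); rewrite ?size_pairvec // => k ka.
  by rewrite nth_pairvec.
elim: a a2 => [|[|[|[|x]]] a IH] //= h.
- by have [i [j [ij ja aij]]] := IH h; exists i.+1, j.+1; split=> // -[|k] //=; apply: aij.
- by have [j ja aj] := sumn_eq1 (succn_inj h); exists 0, j.+1; split=> // -[|k] //=; apply: aj.
- have /natnseq0P a0 : sumn a == 0 by rewrite -(eqn_add2l 2) h.
  by exists 0, 0; split=> // -[|k] //=; rewrite a0 nth_nseq if_same.
Qed.

Lemma sorted_mexpr R a : sorted leq (mexpr R a).
Proof. by rewrite /mexpr; case: (zip R a) => //= p L; apply: sorted_mmul. Qed.

Lemma count_mexpr R a x : size a = size R ->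
  count_mem x (mexpr R a) = \sum_(k < size R) nth 0 a k * count_mem x (nth [::] R k).
Proof.
have count_mpow u k : count_mem x (mpow u k) = k * count_mem x u.
  by elim: k => //= k IH; rewrite count_mmul IH mulSn.
elim: R a => [|u R IH] [|c a] // sa; first by rewrite big_ord0.
rewrite big_ord_recl /= -IH; last by case: sa.
by rewrite /mexpr /= count_mmul count_mpow.
Qed.

Lemma count_mexpr_pairvec R i j x : i < size R -> j < size R ->
  count_mem x (mexpr R (pairvec (size R) i j)) =
  count_mem x (nth [::] R i) + count_mem x (nth [::] R j).
Proof.
move=> iR jR; rewrite count_mexpr ?size_pairvec //.
have delta l (F : nat -> nat) : l < size R -> \sum_(k < size R) (k == l :> nat) * F k = F l.
  move=> lR; rewrite (bigD1 (Ordinal lR)) //= eqxx mul1n big1 ?addn0 // => k.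
  by rewrite -val_eqE /= => /negbTE->.
under eq_bigr => k _ do rewrite nth_pairvec // mulnDl.
by rewrite big_split /= !(delta _ (fun k => count_mem x (nth [::] R k))).
Qed.

Lemma is_expr_pairvec R M b : is_expr R M b ->
  exists i j, [/\ i <= j < size R, b = pairvec (size R) i j &
    perm_eq M (nth [::] R i ++ nth [::] R j)].
Proof.
case=> sb [b2 <-]; have [i [j [ij jb ->]]] := sumn_eq2 b2.
rewrite sb in jb *; exists i, j; split; rewrite ?ij //.
by apply/allP => x _ /=; rewrite count_cat count_mexpr_pairvec // (leq_ltn_trans ij jb).
Qed.

Lemma pairvec_is_expr R M i j : i < size R -> j < size R -> sorted leq M ->
  perm_eq M (nth [::] R i ++ nth [::] R j) -> is_expr R M (pairvec (size R) i j).
Proof.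
move=> iR jR sM pM; split; first exact: size_pairvec.
split; first exact: sumn_pairvec.
apply: (sorted_eq leq_trans anti_leq (sorted_mexpr _ _) sM); rewrite perm_sym.
by apply: perm_trans pM _; apply/allP => x _ /=; rewrite count_cat count_mexpr_pairvec.
Qed.

Lemma lexlt_irr a : ~~ lexlt a a.
Proof. by elim: a => //= x a IH; rewrite ltnn eqxx. Qed.

Lemma lexlt_trans : transitive lexlt.
Proof.
elim=> [|y b IH] [|x a] [|z c] //=.
case/orP=> [xy | /andP[/eqP <- ab]]; case/orP=> [yz | /andP[/eqP <- bc]].
- by rewrite (ltn_trans xy yz).
- by rewrite xy.
- by rewrite yz.
- by rewrite eqxx (IH _ _ ab bc) orbT.
Qed.

Lemma lexlt_total a b : size a = size b -> a != b -> lexlt a b || lexlt b a.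
Proof.
elim: a b => [|x a IH] [|y b] //= [sab] ab.
case: ltngtP => //= xy; subst y.
by apply: IH => //; apply: contraNneq ab => ->.
Qed.

Lemma lexlt_nth a b t : size a = size b -> t < size a ->
  (forall s, s < t -> nth 0 a s = nth 0 b s) -> nth 0 a t < nth 0 b t -> lexlt a b.
Proof.
elim: t a b => [|t IH] [|x a] [|y b] //= [sab] ta eq_ab lt_ab; first by rewrite lt_ab.
have := eq_ab 0 isT; rewrite /= => ->; rewrite ltnn eqxx /=.
by apply: IH => // s st; apply: (eq_ab s.+1).
Qed.

Lemma lexlt_pairvec q i j k l : i <= j -> k < i -> l < q -> j < q ->
  lexlt (pairvec q i j) (pairvec q k l).
Proof.
move=> ij ki lq jq; apply: (@lexlt_nth _ _ (minn k l)); rewrite ?size_pairvec //.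
- by rewrite gtn_min; lia.
- by move=> s s_kl; rewrite !nth_pairvec; lia.
- by rewrite !nth_pairvec; lia.
Qed.

Lemma lexlt_max (L : seq (seq nat)) : L != [::] ->
  exists2 m, m \in L & forall a, a \in L -> ~~ lexlt m a.
Proof.
elim: L => // b [|c L] IH _.
  by exists b; rewrite ?mem_head // => a; rewrite inE => /eqP->; apply: lexlt_irr.
have [m mL mmax] := IH isT.
have [bm | mb] := boolP (lexlt m b).
  exists b; rewrite ?mem_head // => a; rewrite inE => /orP[/eqP->|aL].
    exact: lexlt_irr.
  by apply: contra (mmax a aL) => ba; apply: lexlt_trans bm ba.
exists m => [|a]; first by rewrite inE mL orbT.
by rewrite inE => /orP[/eqP->|/mmax].
Qed.

Lemma exists_max_expr R M b : is_expr R M b -> exists a, is_max_expr R M a.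
Proof.
move=> eb; set q := size R.
pose L := [seq a <- [seq pairvec q i j | i <- iota 0 q, j <- iota 0 q] | mexpr R a == M].
have exprL a : is_expr R M a <-> a \in L.
  split=> [ea | ]; last first.
    rewrite mem_filter => /andP[/eqP aM /allpairsP[[i j] [/= iq jq aE]]].
    move: iq jq aM; rewrite aE !mem_iota => iq jq aM.
    by split; [apply: size_pairvec | split; [apply: sumn_pairvec; lia | ]].
  have [_ [_ aM]] := ea; have [i [j [/andP[ij jq] aE _]]] := is_expr_pairvec ea.
  rewrite mem_filter aM eqxx /= aE; apply/allpairsP.
  by exists (i, j); rewrite /= !mem_iota; split=> //; lia.
have [m mL mmax] : exists2 m, m \in L & forall a, a \in L -> ~~ lexlt m a.
  by apply: lexlt_max; apply: contraTneq (iffLR (exprL b) eb) => ->.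
by exists m; split=> [|a /exprL]; [apply/exprL | apply: mmax].
Qed.

Lemma rooted_gt_irr R M : ~ rooted_gt R M M.
Proof. by case=> a [b [[ea _] [[_ bmax] ba]]]; move: (bmax a ea); rewrite ba. Qed.

Lemma rooted_gt_dominate R M N b0 : is_expr R N b0 ->
  (forall b, is_expr R N b -> exists2 a, is_expr R M a & lexlt b a) -> rooted_gt R M N.
Proof.
move=> eb0 dom; have [bm [ebm bmax]] := exists_max_expr eb0.
have [a ea bma] := dom bm ebm; have [am [eam amax]] := exists_max_expr ea.
exists am, bm; split=> //; split=> //.
have [<- // | a_am] := eqVneq a am.
have := lexlt_total (etrans ea.1 (esym eam.1)) a_am.
by rewrite (negbTE (amax a ea)) orbF; apply: lexlt_trans bma.
Qed.

Definition graft (n : nat) (s t : mono) : mono := sort leq ([seq x <- s | x < n - 3] ++ t).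

Lemma mem_graft n s t x : (x \in graft n s t) = ((x \in s) && (x < n - 3)) || (x \in t).
Proof. by rewrite mem_sort mem_cat mem_filter andbC. Qed.

Lemma count_graft n s t x :
  count_mem x (graft n s t) = (x < n - 3) * count_mem x s + count_mem x t.
Proof.
rewrite count_sort count_cat count_filter; congr (_ + _).
case: ltnP => hx; rewrite ?mul1n ?mul0n.
  by apply: eq_count => y /=; case: eqP => // ->; rewrite hx.
rewrite (@eq_count _ _ pred0) ?count_pred0 // => y /=.
by case: eqP => // ->; rewrite ltnNge hx.
Qed.

Lemma weight_graft n s t : weight (graft n s t) = weight [seq x <- s | x < n - 3] + weight t.
Proof. by rewrite /weight (perm_big _ (permEl (perm_sort _ _))) big_cat. Qed.

Lemma sorted_graft n s t : uniq s -> uniq t -> all (fun x => n - 3 <= x) t ->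
  sorted ltn (graft n s t).
Proof.
move=> us ut /allP tn; apply: sorted_ltn_sort; rewrite cat_uniq filter_uniq // ut andbT.
by apply/hasPn => x /tn; rewrite mem_filter ltnNge => ->.
Qed.

Lemma mincover_graft_high n A : mincover_seq n A -> n - 4 \in A ->
  mincover_seq n (graft n A [:: n - 2; n]).
Proof.
move=> mA A4; have [srt [rng edge mnl]] := mA; have n4 := rng _ A4.
split.
  apply: sorted_graft (mincover_seq_uniq mA) _ _; rewrite /= ?inE ?andbT; lia.
apply: (@eq_mincover _ (fun x => [|| (x \in A) && (x < n - 3), x == n - 2 | x == n])).
  by move=> x; rewrite mem_graft !inE.
split=> k.
- by move=> /or3P[/andP[/rng] | |]; lia.
- by move=> hk; have [->|] := eqVneq k (n - 4); [rewrite A4 | have := edge k]; lia.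
- by move=> /or3P[/andP[/mnl] | |]; lia.
Qed.

Lemma mincover_graft_low n C : 5 <= n -> mincover_seq n C -> n - 4 \notin C ->
  mincover_seq n (graft n C [:: n - 3; n - 1]).
Proof.
move=> n5 mC nC4; have [srt [rng edge mnl]] := mC.
split.
  apply: sorted_graft (mincover_seq_uniq mC) _ _; rewrite /= ?inE ?andbT; lia.
apply: (@eq_mincover _ (fun x => [|| (x \in C) && (x < n - 3), x == n - 3 | x == n - 1])).
  by move=> x; rewrite mem_graft !inE.
split=> k.
- by move=> /or3P[/andP[/rng] | |]; lia.
- by move=> hk; have := edge k; lia.
- move=> /or3P[/andP[kC kn] | |]; try lia.
  have [ek | nk] := eqVneq k (n - 4); first by move: nC4; rewrite -ek kC.
  by have := mnl k kC; lia.
Qed.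

Lemma mincover_tail n v : 5 <= n -> mincover n v -> v (n - 3) -> v n ->
  [/\ ~~ v (n - 1), v (n - 2) & ~~ v (n - 4)].
Proof.
move=> n5 mv; have [k nk] : exists k, n = k.+4 by exists (n - 4); lia.
have v_edge : v k.+2 || v k.+3 by apply: mincover_edge mv _; lia.
subst n; rewrite !subSS !subn0 => v1 v4.
have nv3 : ~~ v k.+3 by have := mincover_last (ltn0Sn _) mv; rewrite v4 andbT.
have v2 : v k.+2 by rewrite (negbTE nv3) orbF in v_edge.
by split=> //; have := mincover_no_three k mv; rewrite v1 v2 !andbT.
Qed.

Lemma mincover_factor_tails n (u v A C : nat -> bool) : 5 <= n ->
  mincover n u -> mincover n v -> mincover n A -> mincover n C ->
  u (n - 4) -> u (n - 1) -> v (n - 3) -> v n ->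
  (forall x, A x + C x = u x + v x) -> ~~ A n ->
  [/\ A (n - 4), A (n - 1), C (n - 3) & C n].
Proof.
move=> n5 mu mv mA mC; have [k nk] : exists k, n = k.+4 by exists (n - 4); lia.
have u_edge : u k.+1 || u k.+2 by apply: mincover_edge mu _; lia.
have := mincover_tail n5 mC; have := mincover_tail n5 mv; subst n; rewrite !subSS !subn0.
move=> tail_v tail_C u0 u3 v1 v4 hc nA4; have [nv3 v2 nv0] := tail_v v1 v4.
have nu4 : ~~ u k.+4 by have := mincover_last (ltn0Sn _) mu; rewrite u3.
have C4 : C k.+4 by move: (hc k.+4); rewrite (negbTE nA4) (negbTE nu4) v4; case: (C _).
have nC3 : ~~ C k.+3 by have := mincover_last (ltn0Sn _) mC; rewrite C4 andbT.
have A3 : A k.+3 by move: (hc k.+3); rewrite (negbTE nC3) (negbTE nv3) u3; case: (A _).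
have C1 : C k.+1.
  have [u2 | nu2] := boolP (u k.+2).
    have nu1 : ~~ u k.+1 by have := mincover_no_three k.+1 mu; rewrite u2 u3 !andbT.
    have A2 : A k.+2 by move: (hc k.+2); rewrite u2 v2; case: (A _); case: (C _).
    have nA1 : ~~ A k.+1 by have := mincover_no_three k.+1 mA; rewrite A2 A3 !andbT.
    by move: (hc k.+1); rewrite (negbTE nu1) v1 (negbTE nA1); case: (C _).
  rewrite (negbTE nu2) orbF in u_edge.
  by move: (hc k.+1); rewrite u_edge v1; case: (A _); case: (C _).
have [_ _ nC0] := tail_C C1 C4.
by split=> //; move: (hc k); rewrite u0 (negbTE nv0) (negbTE nC0); case: (A _).
Qed.

Lemma weight_graft_low_lt n A C : 5 <= n -> mincover_seq n A -> uniq C ->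
  n - 4 \in A -> n - 1 \in A -> n - 4 \notin C ->
  weight (graft n C [:: n - 3; n - 1]) < weight A.
Proof.
move=> n5 mA uC; have [k nk] : exists k, n = k.+4 by exists (n - 4); lia.
have A_edge : (k.+1 \in A) || (k.+2 \in A) by have [_ [_ edge _]] := mA; apply: edge; lia.
subst n; rewrite !subSS !subn0 => A0 A3 nC0.
have wC : weight [seq x <- C | x < k.+1] < 2 ^ k.
  apply: weight_lt_pow (filter_uniq _ uC) _ => x; rewrite mem_filter => /andP[xk xC].
  by rewrite ltn_neqAle -ltnS xk andbT; apply: contraNneq nC0 => <-.
have wA m : k < m < k.+3 -> m \in A -> 2 ^ k + 2 ^ m + 2 ^ k.+3 <= weight A.
  move=> km mA'; have -> : 2 ^ k + 2 ^ m + 2 ^ k.+3 = weight [:: k; m; k.+3].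
    by rewrite /weight !big_cons big_nil addn0 addnA.
  apply: leq_weight (mincover_seq_uniq mA) _; first by rewrite /= !inE; lia.
  by move=> x; rewrite !inE => /or3P[] /eqP->.
rewrite weight_graft !subSS subn0; have -> : weight [:: k.+1; k.+3] = 2 ^ k.+1 + 2 ^ k.+3.
  by rewrite /weight !big_cons big_nil addn0.
by case/orP: A_edge => /wA; rewrite !expnS; lia.
Qed.

Lemma perm_graft n s1 s2 t : perm_eq s1 s2 -> perm_eq (graft n s1 t) (graft n s2 t).
Proof. by move=> /permP s12; apply/allP => x _ /=; rewrite !count_graft s12 eqxx. Qed.

Lemma perm_graft_cat n s1 s2 t1 t2 :
  perm_eq (graft n s1 t1 ++ graft n s2 t2) (graft n (s1 ++ s2) (t1 ++ t2)).
Proof. by apply/allP => x _ /=; rewrite !count_cat !count_graft !count_cat mulnDr addnACA. Qed.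

Section TailSwap.

Variables (n : nat) (u v : mono).
Hypotheses (n5 : 5 <= n) (mu : mincover_seq n u) (mv : mincover_seq n v).
Hypotheses (u4 : n - 4 \in u) (u1 : n - 1 \in u) (v3 : n - 3 \in v) (vn : n \in v).

Let p := graft n u [:: n - 2; n].
Let w := graft n v [:: n - 3; n - 1].

Lemma tail_swap_inF2 : inF2 n (mmul p w).
Proof.
have [_ _ nv4] := mincover_tail n5 mv.2 v3 vn.
exists p, w; split; first exact/mincover_inGJ/mincover_graft_high.
by split=> //; exact/mincover_inGJ/mincover_graft_low.
Qed.

Lemma tail_swap_dvd : mdvd (mmul p w) (mmul u v).
Proof.
have [_ v2 _] := mincover_tail n5 mv.2 v3 vn.
apply/allP => x _; rewrite /p /w count_mmul !count_graft count_mmul.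
have [uu uv] := (mincover_seq_uniq mu, mincover_seq_uniq mv).
rewrite !(count_uniq_mem _ uu) !(count_uniq_mem _ uv) /=.
have [-> | ] := eqVneq x (n - 3); first by rewrite v3; lia.
have [-> | ] := eqVneq x (n - 2); first by rewrite v2; lia.
have [-> | ] := eqVneq x (n - 1); first by rewrite u1; lia.
have [-> | ] := eqVneq x n; first by rewrite vn; lia.
by case: (x \in u); case: (x \in v); lia.
Qed.

Lemma tail_swap_factor A C : mincover_seq n A -> mincover_seq n C ->
  perm_eq (A ++ C) (u ++ v) -> weight A <= weight C ->
  [/\ n - 4 \in A, n - 1 \in A, n - 3 \in C & n \in C].
Proof.
move=> mA mC ACuv wAC; have n0 : 0 < n by lia.
have [uu uv] := (mincover_seq_uniq mu, mincover_seq_uniq mv).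
have [uA uC] := (mincover_seq_uniq mA, mincover_seq_uniq mC).
have nun : n \notin u by have := mincover_last n0 mu.2; rewrite -subn1 u1.
have hc x : (x \in A) + (x \in C) = (x \in u) + (x \in v).
  by rewrite -!count_uniq_mem // -!count_cat (permP ACuv).
apply: (mincover_factor_tails n5 mu.2 mv.2 mA.2 mC.2 u4 u1 v3 vn hc).
apply/negP => An; have nC : n \notin C.
  by move: (hc n); rewrite An (negbTE nun) vn; case: (n \in C).
have wC : weight C < 2 ^ n.
  apply: weight_lt_pow uC _ => x xC; have /andP[_ xn] := mincover_seq_range mC xC.
  by rewrite ltn_neqAle xn andbT; apply: contraNneq nC => <-.
have : weight [:: n] <= weight A by apply: leq_weight uA _ => // x; rewrite inE => /eqP->.
by rewrite {1}/weight big_seq1 => wA; move: (leq_ltn_trans wAC wC); rewrite ltnNge wA.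
Qed.

Lemma tail_swap_dominates b : is_expr (rlist n) (mmul u v) b ->
  exists2 a, is_expr (rlist n) (mmul p w) a & lexlt b a.
Proof.
have n2 : 2 <= n by lia.
set R := rlist n; have srt : sorted (relpre weight ltn) R := rlist_sorted n2.
have uR : uniq R by apply: sorted_uniq srt => [y x z | x]; [apply: ltn_trans | apply: ltnn].
move=> eb; have [i [j [/andP[ij jR] -> ACuv]]] := is_expr_pairvec eb.
rewrite perm_sort perm_sym in ACuv; have iR := leq_ltn_trans ij jR.
set A := nth [::] R i; set C := nth [::] R j.
have AR : A \in R := mem_nth _ iR; have CR : C \in R := mem_nth _ jR.
have mA : mincover_seq n A := rlist_mincover n2 AR.
have mC : mincover_seq n C := rlist_mincover n2 CR.
have wAC : weight A <= weight C.
  by rewrite leqNgt -(ltn_index_weight srt CR AR) !index_uniq // -leqNgt.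
have [A4 A1 C3 Cn] := tail_swap_factor mA mC ACuv wAC.
have [_ _ nC4] := mincover_tail n5 mC.2 C3 Cn.
set P := graft n A [:: n - 2; n]; set W := graft n C [:: n - 3; n - 1].
have PR : P \in R by apply: mincover_in_rlist n2 _; apply: mincover_graft_high.
have WR : W \in R by apply: mincover_in_rlist n2 _; apply: mincover_graft_low.
exists (pairvec (size R) (index W R) (index P R)).
  apply: pairvec_is_expr; rewrite ?index_mem ?nth_index //; first exact: sorted_mmul.
  rewrite perm_sort perm_sym perm_catC.
  apply: perm_trans (perm_graft_cat _ _ _ _ _) _; rewrite perm_sym.
  apply: perm_trans (perm_graft_cat _ _ _ _ _) _.
  by apply: perm_graft; rewrite perm_sym.
apply: lexlt_pairvec; rewrite ?index_mem //.
rewrite -(index_uniq [::] iR uR) ltn_index_weight //.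
by apply: weight_graft_low_lt; rewrite ?(mincover_seq_uniq mC).
Qed.

End TailSwap.

Lemma is_expr_mmul R X Y : X \in R -> Y \in R ->
  is_expr R (mmul X Y) (pairvec (size R) (index X R) (index Y R)).
Proof.
move=> XR YR; apply: pairvec_is_expr; rewrite ?index_mem ?nth_index //.
  exact: sorted_mmul.
by rewrite perm_sort.
Qed.

Lemma rooted_gt_not_inGJ2 n N M : inF2 n N -> mdvd N M -> rooted_gt (rlist n) N M ->
  ~ inGJ2 n M.
Proof.
move=> FN NM gtNM [_ minM].
by apply: (@rooted_gt_irr (rlist n) M); rewrite -{1}(minM N FN NM).
Qed.

Theorem lemma4p1 (n : nat) (u v : mono) :
  5 <= n ->
  inGJ n u -> inGJ n v ->
  mdvd [:: n - 4; n - 1] u ->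
  mdvd [:: n - 3; n] v ->
  ~ inGJ2 n (mmul u v) /\
  exists pw : mono,
    inF2 n pw /\ mdvd pw (mmul u v) /\ rooted_gt (rlist n) pw (mmul u v).
Proof.
move=> n5 /inGJ_mincover mu /inGJ_mincover mv /mdvd_subset du /mdvd_subset dv.
have u4 : n - 4 \in u by apply: du; rewrite mem_head.
have u1 : n - 1 \in u by apply: du; rewrite !inE eqxx orbT.
have v3 : n - 3 \in v by apply: dv; rewrite mem_head.
have vn : n \in v by apply: dv; rewrite !inE eqxx orbT.
have [uR vR] : u \in rlist n /\ v \in rlist n by split; apply: mincover_in_rlist => //; lia.
have F2 := tail_swap_inF2 n5 mu mv u4 v3 vn.
have D := tail_swap_dvd n5 mu mv u4 u1 v3 vn.
have G := rooted_gt_dominate (is_expr_mmul uR vR) (tail_swap_dominates n5 mu mv u4 u1 v3 vn).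
split; first exact: rooted_gt_not_inGJ2 F2 D G.
by exists (mmul (graft n u [:: n - 2; n]) (graft n v [:: n - 3; n - 1])).
Qed.
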